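(* Let $d$ be a nonnegative integer and let $P_n(x_1,\dots,x_n)$ be the terms defined by $P_0=1$ and $P_{n+1}=(P_n-x_{n+1})\wedge x_{n+1}$. A co-Heyting algebra $L$ satisfies $\dim L\le d$ if and only if $L$ satisfies the identity $P_{d+1}(x_1,\dots,x_{d+1})=0$ (for all $x_1,\dots,x_{d+1}\in L$).
   Context: A co-Heyting algebra is a bounded distributive lattice $(L,0,1,\vee,\wedge)$ such that $a-b=\min\{c\in L: a\le b\vee c\}$ exists for all $a,b$. $\operatorname{Spec}L$ is the set of prime filters ordered by inclusion; the coheight of a prime filter is its cofoundation rank in $\operatorname{Spec}L$ (foundation rank for reverse inclusion: rank $\ge\beta+1$ iff some strictly larger prime filter has rank $\ge\beta$, limits by intersection). $\dim L=\sup\{\operatorname{coheight}\mathfrak p:\mathfrak p\in\operatorname{Spec}L\}$ (the dimension of the element $1$). *)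

From mathcomp Require Import all_boot all_order.
Set Implicit Arguments. Unset Strict Implicit. Unset Printing Implicit Defensive.
Import Order.TTheory.
Local Open Scope order_scope.

Definition is_coheyting_diff {disp : Order.disp_t} {L : tbDistrLatticeType disp}
  (sub : L -> L -> L) : Prop :=
  forall a b : L, a <= b `|` sub a b /\ (forall c : L, a <= b `|` c -> sub a b <= c).

Definition is_prime_filter {disp : Order.disp_t} {L : tbDistrLatticeType disp}
  (F : L -> Prop) : Prop :=
  [/\ F \top,
      ~ F \bot,
      (forall a b : L, F a -> a <= b -> F b),
      (forall a b : L, F a -> F b -> F (a `&` b))
    & (forall a b : L, F (a `|` b) -> F a \/ F b)].

Definition strict_incl {T : Type} (F G : T -> Prop) : Prop :=
  (forall x, F x -> G x) /\ exists x, G x /\ ~ F x.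

(* coheight_ge n F : the cofoundation rank of F in Spec L is >= n
   (finite levels of the paper's recursion: rank >= 0 always, rank >= n+1 iff
   some strictly larger prime filter has rank >= n). *)
Fixpoint coheight_ge {disp : Order.disp_t} {L : tbDistrLatticeType disp}
  (n : nat) (F : L -> Prop) : Prop :=
  match n with
  | 0 => True
  | n'.+1 => exists G : L -> Prop,
      is_prime_filter G /\ strict_incl F G /\ coheight_ge n' G
  end.

Definition dim_le {disp : Order.disp_t} (L : tbDistrLatticeType disp) (d : nat) : Prop :=
  forall F : L -> Prop, is_prime_filter F -> ~ coheight_ge d.+1 F.

(* The terms P_n : P_0 = 1, P_{n+1} = (P_n - x_{n+1}) `&` x_{n+1};
   the variable x_{k+1} is  x k. *)
Fixpoint Pterm {disp : Order.disp_t} {L : tbDistrLatticeType disp}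
  (sub : L -> L -> L) (n : nat) (x : nat -> L) : L :=
  match n with
  | 0 => \top
  | n'.+1 => sub (Pterm sub n' x) (x n') `&` x n'
  end.

(* If a prime filter [G] contains [c - b], the ideal generated by [b] and the
   complement of [G] misses [c], so by Zorn's lemma some prime filter inside
   [G] contains [c] but not [b].  A prime filter containing [P_(n+1)(x)] thus
   sits strictly above a prime filter containing [P_n(x)], and a nonzero
   [P_(d+1)(x)] produces a chain of prime filters of length [d+1].
   Conversely, along a chain [F_0 < ... < F_n] pick [y_i] in [F_i] but not in
   [F_(i-1)]; as [a <= y \/ (a - y)], primality carries [a] in [F_0] to
   [(a - y_1) /\ y_1] in [F_1], and so on, so [P_n(y)] lies in [F_n] and is
   nonzero. *)
From mathcomp Require Import all_boot all_order.
From mathcomp Require Import boolp classical_sets.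

Set Implicit Arguments.
Unset Strict Implicit.
Unset Printing Implicit Defensive.

Import Order.TTheory.
Local Open Scope order_scope.

Section PrimeFilterTheorem.
Context {disp : Order.disp_t} {L : tbDistrLatticeType disp}.

Definition is_filter (X : L -> Prop) :=
  (forall a b, X a -> a <= b -> X b) /\ (forall a b, X a -> X b -> X (a `&` b)).

Definition is_ideal (I : L -> Prop) :=
  [/\ I \bot, (forall a b, I b -> a <= b -> I a)
    & (forall a b, I a -> I b -> I (a `|` b))].

Definition avoids (I X : L -> Prop) := forall z, X z -> ~ I z.

Lemma filter_adjoin (A : L -> Prop) (a : L) : is_filter A ->
  is_filter (fun z => exists2 m, A m & m `&` a <= z).
Proof.
case=> _ AI; split=> [u v [m Am mu] uv|u v [m Am mu] [m' Am' mv]].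
  by exists m => //; apply: le_trans uv.
exists (m `&` m'); first exact: AI.
by rewrite lexI (le_trans (leI2 (leIl m m') (lexx a)) mu)
              (le_trans (leI2 (leIr m' m) (lexx a)) mv).
Qed.

Lemma maximal_avoiding_filter_prime (I A : L -> Prop) (c : L) :
  is_ideal I -> is_filter A -> A c -> avoids I A ->
  (forall B, proper A B -> is_filter B -> ~ avoids I B) ->
  is_prime_filter A.
Proof.
case=> I0 Idown IU AF Ac Adis Amax; have [Aup AI] := AF.
have adjoin_meets a : ~ A a -> exists2 m, A m & I (m `&` a).
  move=> nAa; apply: contrapT => noI; apply: (Amax _ _ (filter_adjoin a AF)).
  - split=> [z Az|adjoinA]; first by exists z => //; exact: leIl.
    by apply: nAa; apply: adjoinA; exists c => //; exact: leIr.
  - by move=> z [m Am mz] Iz; apply: noI; exists m => //; exact: Idown mz.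
split=> //; [exact: Aup Ac (lex1 c) | by move=> /Adis | ].
move=> a b Aab; apply: contrapT => /not_orP[nAa nAb].
have [m1 Am1 I1] := adjoin_meets a nAa.
have [m2 Am2 I2] := adjoin_meets b nAb.
apply: (Adis (m1 `&` m2 `&` (a `|` b))); first exact: AI (AI _ _ Am1 Am2) Aab.
apply: Idown (IU _ _ I1 I2) _.
by rewrite meetUr; exact: leU2 (leI2 (leIl m1 m2) (lexx a)) (leI2 (leIr m2 m1) (lexx b)).
Qed.

Lemma exists_maximal_avoiding_filter (I : L -> Prop) (c : L) :
  is_ideal I -> ~ I c ->
  exists A, [/\ is_filter A, A c, avoids I A
    & forall B, proper A B -> is_filter B -> ~ avoids I B].
Proof.
case=> _ Idown _ nIc.
(* The clause [X z -> X c] admits the empty set, the union of the empty chain. *)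
pose admissible X := [/\ is_filter X, avoids I X & forall z, X z -> X c].
have [A [[AF Adis Ac] Amax]] : exists A, admissible A /\ forall B, proper A B -> ~ admissible B.
  apply: Zorn_bigcup => F FP Ftot; split; first split.
  - move=> a b [X FX Xa] ab; exists X => //; have [[Xup _] _ _] := FP X FX; exact: Xup ab.
  - move=> a b [X FX Xa] [Y FY Yb]; have [XY|YX] := Ftot X Y FX FY.
    + by exists Y => //; have [[_ YI] _ _] := FP Y FY; apply: YI => //; exact: XY.
    + by exists X => //; have [[_ XI] _ _] := FP X FX; apply: XI => //; exact: YX.
  - by move=> z [X FX Xz]; have [_ Xdis _] := FP X FX; exact: Xdis.
  - by move=> z [X FX Xz]; exists X => //; have [_ _ Xc] := FP X FX; exact: Xc Xz.
have Ac0 : A c.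
  apply: contrapT => nAc; apply: (Amax (fun z => c <= z)).
  - by split=> [z /Ac //|/(_ c (lexx c))].
  - split=> [|z cz Iz|//]; last by apply: nIc; exact: Idown cz.
    by split=> [a b ca /(le_trans ca)//|a b ca cb]; rewrite lexI ca cb.
exists A; split=> // B AB BF Bdis; apply: (Amax B AB); split=> // z _.
by case: AB => /(_ c Ac0).
Qed.

Lemma prime_filter_avoiding_ideal (I : L -> Prop) (c : L) :
  is_ideal I -> ~ I c -> exists F, [/\ is_prime_filter F, F c & avoids I F].
Proof.
move=> Iid nIc; have [A [AF Ac Adis Amax]] := exists_maximal_avoiding_filter Iid nIc.
by exists A; split=> //; exact: maximal_avoiding_filter_prime Iid AF Ac Adis Amax.
Qed.

Lemma prime_filter_of_neq0 (c : L) : c <> \bot -> exists F, is_prime_filter F /\ F c.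
Proof.
move=> c_neq0; have [|F [PF Fc _]] := @prime_filter_avoiding_ideal (eq^~ \bot) c _ c_neq0.
  by split=> // [a b -> | a b -> ->]; rewrite ?lex0 ?joinxx // => /eqP.
by exists F.
Qed.

Lemma prime_filter_neq0 (F : L -> Prop) (a : L) : is_prime_filter F -> F a -> a <> \bot.
Proof. by case=> _ F0 _ _ _ Fa a0; apply: F0; rewrite -a0. Qed.

End PrimeFilterTheorem.

Section CoHeyting.
Context {disp : Order.disp_t} {L : tbDistrLatticeType disp}.
Variable sub : L -> L -> L.
Hypothesis Hsub : is_coheyting_diff sub.

Lemma prime_filter_sub (F : L -> Prop) (a b : L) :
  is_prime_filter F -> F a -> ~ F b -> F (sub a b).
Proof.
case=> _ _ Fup _ FU Fa nFb.
by have /FU[/nFb|] := Fup _ _ Fa (proj1 (Hsub a b)).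
Qed.

Lemma prime_filter_below_sub (G : L -> Prop) (c b : L) :
  is_prime_filter G -> G (sub c b) ->
  exists F, [/\ is_prime_filter F, F c, ~ F b & forall z, F z -> G z].
Proof.
case=> _ G0 Gup _ GU Gcb.
pose I z := exists2 j, ~ G j & z <= b `|` j.
have Iid : is_ideal I.
  split=> [|u v [j nGj vj] uv|u v [j nGj uj] [j' nGj' vj']].
  - by exists \bot => //; exact: le0x.
  - by exists j => //; exact: le_trans vj.
  - exists (j `|` j'); first by case/GU.
    by rewrite leUx (le_trans uj (leU2 (lexx b) (leUl j j')))
                    (le_trans vj' (leU2 (lexx b) (leUr j' j))).
have nIc : ~ I c by case=> j nGj /(proj2 (Hsub c b)) cbj; apply: nGj; exact: Gup Gcb cbj.
have [F [PF Fc Fdis]] := prime_filter_avoiding_ideal Iid nIc.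
exists F; split=> // [Fb|z Fz]; first by apply: (Fdis b Fb); exists \bot; rewrite ?leUl.
by apply: contrapT => nGz; apply: (Fdis z Fz); exists z; rewrite ?leUr.
Qed.

Lemma coheight_ge_of_Pterm (x : nat -> L) n : forall m (G : L -> Prop),
  is_prime_filter G -> G (Pterm sub n x) -> coheight_ge m G ->
  exists F : L -> Prop, is_prime_filter F /\ coheight_ge (n + m) F.
Proof.
elim: n => [|n IH] m G PG GP Gm; first by exists G.
have [_ _ Gup _ _] := PG.
have [F [PF FP nFx FG]] := prime_filter_below_sub PG (Gup _ _ GP (leIl _ _)).
rewrite addSnnS; apply: (IH m.+1 F PF FP); exists G; do 2!split=> //.
by split=> //; exists (x n); split=> //; exact: Gup _ _ GP (leIr _ _).
Qed.

Fixpoint Pterm_from (a : L) (n : nat) (x : nat -> L) : L :=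
  if n is n'.+1 then sub (Pterm_from a n' x) (x n') `&` x n' else a.

Lemma Pterm_fromT n x : Pterm sub n x = Pterm_from \top n x.
Proof. by elim: n => //= n ->. Qed.

Lemma Pterm_fromS n : forall a x,
  Pterm_from a n.+1 x = Pterm_from (sub a (x 0) `&` x 0) n (fun i => x i.+1).
Proof. by elim: n => // n IH a x /=; rewrite -IH. Qed.

Lemma Pterm_from_neq0 n : forall F : L -> Prop, is_prime_filter F -> coheight_ge n F ->
  forall a, F a -> exists x, Pterm_from a n x <> \bot.
Proof.
elim: n => [|n IH] F PF; first by move=> _ a Fa; exists (fun=> a); exact: prime_filter_neq0 PF Fa.
move=> [G [PG [[FG [y [Gy nFy]]] HG]]] a Fa.
have [_ _ _ GI _] := PG.
have [x Hx] := IH G PG HG _ (GI _ _ (FG _ (prime_filter_sub PF Fa nFy)) Gy).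
by exists (fun i => if i is i'.+1 then x i' else y); rewrite Pterm_fromS.
Qed.

End CoHeyting.

Theorem proposition3p12 (disp : Order.disp_t) (L : tbDistrLatticeType disp)
  (sub : L -> L -> L) (Hsub : is_coheyting_diff sub) (d : nat) :
  dim_le L d <-> (forall x : nat -> L, Pterm sub d.+1 x = \bot).
Proof.
split=> [Hd x|HP F PF HF].
- apply: contrapT => /prime_filter_of_neq0[G [PG GP]].
  have [F [PF]] := coheight_ge_of_Pterm Hsub PG GP (I : coheight_ge 0 G).
  by rewrite addn0; exact: Hd F PF.
- have [Ft _ _ _ _] := PF.
  have [x []] := Pterm_from_neq0 Hsub PF HF Ft.
  by rewrite -Pterm_fromT HP.
Qed.
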